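(* Let $\mathcal{H}$ be a separable infinite-dimensional complex Hilbert space, let $T\in\mathscr{B}(\mathcal{H})$ have dense range, let $x_0\in\mathcal{H}$ be nonzero and let $0<\varepsilon<\|x_0\|$. Set $$\mathcal{V}_{x_0,\varepsilon}:=\{x\in\mathcal{H}:\|x-x_0\|=\varepsilon\}\cap\{x\in\mathcal{H}:\|x\|\leqslant\sqrt{\|x_0\|^2-\varepsilon^2}\}.$$ Then $Ty_{x_0,\varepsilon}\in\mathcal{V}_{x_0,\varepsilon}$, and $\|y_{x_0,\varepsilon}\|\leqslant\|y\|$ for every $y\in\mathcal{H}$ with $Ty\in\mathcal{V}_{x_0,\varepsilon}$; i.e. $y_{x_0,\varepsilon}$ is the vector of smallest norm whose image under $T$ lies in $\mathcal{V}_{x_0,\varepsilon}$.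
   Context: For $T\in\mathscr{B}(\mathcal{H})$ with dense range, $x_0\neq 0$ and $0<\varepsilon<\|x_0\|$, the extremal vector $y_{x_0,\varepsilon}$ is the unique vector $y_0\in\mathcal{H}$ with $\|Ty_0-x_0\|\leqslant\varepsilon$ and $\|y_0\|=\inf\{\|y\|:\|Ty-x_0\|\leqslant\varepsilon\}$. *)

From mathcomp Require Import all_boot all_order all_algebra.
From mathcomp Require Export complex.
From mathcomp Require Export reals.
Set Implicit Arguments. Unset Strict Implicit. Unset Printing Implicit Defensive.
Import Order.TTheory GRing.Theory Num.Theory.
Local Open Scope ring_scope.
Local Open Scope complex_scope.

Section Hilbert.
Variables (R : realType) (H : lmodType R[i]) (ip : H -> H -> R[i]).

Record is_inner_product : Prop := {
  ip_linl : forall (a : R[i]) (x y z : H), ip (a *: x + y) z = a * ip x z + ip y z;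
  ip_sym  : forall x y : H, ip y x = (ip x y)^*;
  ip_pos  : forall x : H, 0 <= complex.Re (ip x x);
  ip_def  : forall x : H, ip x x = 0 -> x = 0 }.

Definition hnorm (x : H) : R := Num.sqrt (complex.Re (ip x x)).

Definition hcauchy (u : nat -> H) : Prop :=
  forall e : R, 0 < e -> exists N : nat, forall m n : nat,
    (N <= m)%N -> (N <= n)%N -> hnorm (u m - u n) < e.

Definition hconverges (u : nat -> H) (l : H) : Prop :=
  forall e : R, 0 < e -> exists N : nat, forall n : nat,
    (N <= n)%N -> hnorm (u n - l) < e.

Definition hcomplete : Prop :=
  forall u : nat -> H, hcauchy u -> exists l : H, hconverges u l.

Definition hseparable : Prop :=
  exists d : nat -> H, forall (x : H) (e : R), 0 < e ->
    exists n : nat, hnorm (x - d n) < e.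

Definition lin_indep (n : nat) (v : 'I_n -> H) : Prop :=
  forall c : 'I_n -> R[i], \sum_(i < n) c i *: v i = 0 -> forall i, c i = 0.

Definition infinite_dimensional : Prop :=
  forall n : nat, exists v : 'I_n -> H, lin_indep v.

Record sep_inf_dim_hilbert : Prop := {
  hs_ip : is_inner_product;
  hs_complete : hcomplete;
  hs_separable : hseparable;
  hs_infdim : infinite_dimensional }.

Definition bounded_operator (T : H -> H) : Prop :=
  (forall (a : R[i]) (x y : H), T (a *: x + y) = a *: T x + T y) /\
  exists M : R, forall x : H, hnorm (T x) <= M * hnorm x.

Definition dense_range (T : H -> H) : Prop :=
  forall (x : H) (e : R), 0 < e -> exists y : H, hnorm (T y - x) < e.

(* y0 is the extremal vector y_{x0,eps}: ||T y0 - x0|| <= eps and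
   ||y0|| = inf { ||y|| : ||T y - x0|| <= eps } (written out). *)
Definition extremal_vector (T : H -> H) (x0 : H) (eps : R) (y0 : H) : Prop :=
  hnorm (T y0 - x0) <= eps /\
  forall y : H, hnorm (T y - x0) <= eps -> hnorm y0 <= hnorm y.

Definition in_V (x0 : H) (eps : R) (x : H) : Prop :=
  hnorm (x - x0) = eps /\ hnorm x <= Num.sqrt (hnorm x0 ^+ 2 - eps ^+ 2).

End Hilbert.

(* Since y0 is extremal and nonzero (||x0|| > eps), no vector t y0 with
   0 <= t < 1 satisfies the constraint.  Hence the quadratic
   f(t) = ||t T y0 - x0||^2 = t^2 a - 2 t c + ||x0||^2, with a = ||T y0||^2
   and c = Re <T y0, x0>, exceeds eps^2 on [0, 1) while f(1) <= eps^2.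
   Letting t -> 1 gives f(1) = eps^2, i.e. ||T y0 - x0|| = eps, and
   f'(1) <= 0, i.e. a <= c; with f(1) = eps^2 the latter is exactly
   ||T y0||^2 <= ||x0||^2 - eps^2.  Minimality over V is immediate since V
   lies in the eps-ball around x0. *)
From mathcomp Require Import all_boot all_order all_algebra complex reals.
From mathcomp Require Import ring lra.
Import Order.TTheory GRing.Theory Num.Theory.
Set Implicit Arguments. Unset Strict Implicit. Unset Printing Implicit Defensive.
Local Open Scope ring_scope.
Local Open Scope complex_scope.

Lemma le_of_forall_lt_small (R : realFieldType) (x y z : R) :
  (forall d, 0 < d < 1 -> x < d * y + z) -> x <= z.
Proof.
move=> small; rewrite leNgt; apply/negP => lt_zx.
have y_ge0 := normr_ge0 y.
have m_gt0 : 0 < `|y| + (x - z) + 1 by lra.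
pose d := (x - z) / (`|y| + (x - z) + 1).
have dm : d * (`|y| + (x - z) + 1) = x - z by rewrite divfK // gt_eqF.
have d_gt0 : 0 < d by rewrite divr_gt0 // subr_gt0.
have d_lt1 : d < 1 by rewrite ltr_pdivrMr // mul1r; lra.
have dy : d * y <= d * `|y| by rewrite ler_pM2l // ler_norm.
have : 0 < d * (x - z + 1) by apply: mulr_gt0 => //; lra.
have := small d; rewrite d_gt0 d_lt1 => /(_ isT).
by rewrite mulrDr mulrDr in dm; rewrite mulrDr; lra.
Qed.

Lemma quadratic_above_near0 (R : realFieldType) (a k g : R) :
  0 <= a -> 0 <= g -> (forall d, 0 < d < 1 -> g < d * (d * a - 2%:R * k)) ->
  g = 0 /\ k <= 0.
Proof.
move=> a_ge0 g_ge0 above; split.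
  apply/eqP; rewrite eq_le g_ge0 andbT.
  apply: (le_of_forall_lt_small (y := a - 2%:R * k)) => d /andP[d_gt0 d_lt1].
  rewrite addr0.
  have : d * (d * a) <= d * a by rewrite ler_pM2l // ler_piMl // ltW.
  have := above d; rewrite d_gt0 d_lt1 !mulrBr => /(_ isT); lra.
have : 2%:R * k <= 0.
  apply: (le_of_forall_lt_small (y := a)) => d /andP[d_gt0 d_lt1].
  rewrite addr0.
  have := above d; rewrite d_gt0 d_lt1 => /(_ isT) /(le_lt_trans g_ge0).
  by rewrite pmulr_rgt0 //; lra.
lra.
Qed.

Section InnerProduct.
Variables (R : realType) (H : lmodType R[i]) (ip : H -> H -> R[i]).
Hypothesis hip : is_inner_product ip.

Lemma ip0l z : ip 0 z = 0.
Proof. by have := ip_linl hip (-1) 0 0 z; rewrite scaler0 addr0 mulN1r addNr. Qed.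

Lemma ipDl x y z : ip (x + y) z = ip x z + ip y z.
Proof. by have := ip_linl hip 1 x y z; rewrite scale1r mul1r. Qed.

Lemma ipZl a x z : ip (a *: x) z = a * ip x z.
Proof. by have := ip_linl hip a x 0 z; rewrite addr0 ip0l addr0. Qed.

Lemma ipNl x z : ip (- x) z = - ip x z.
Proof. by rewrite -scaleN1r ipZl mulN1r. Qed.

Lemma ipDr x y z : ip z (x + y) = ip z x + ip z y.
Proof.
by rewrite (ip_sym hip) ipDl rmorphD [ip z x](ip_sym hip) [ip z y](ip_sym hip).
Qed.

Lemma ipZr a x z : ip z (a *: x) = a^* * ip z x.
Proof. by rewrite (ip_sym hip) ipZl rmorphM [ip z x](ip_sym hip). Qed.

Lemma ipNr x z : ip z (- x) = - ip z x.
Proof. by rewrite -scaleN1r ipZr rmorphN rmorph1 mulN1r. Qed.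

Lemma ReD (x y : R[i]) : complex.Re (x + y) = complex.Re x + complex.Re y.
Proof. by case: x; case: y. Qed.

Lemma ReN (x : R[i]) : complex.Re (- x) = - complex.Re x.
Proof. by case: x. Qed.

Lemma ReJ (z : R[i]) : complex.Re z^* = complex.Re z.
Proof. by case: z. Qed.

Lemma ReMr (t : R) (z : R[i]) : complex.Re (t%:C * z) = t * complex.Re z.
Proof. by case: z => a b /=; ring. Qed.

Lemma ReMJr (t : R) (z : R[i]) : complex.Re (t%:C^* * z) = t * complex.Re z.
Proof. by case: z => a b /=; ring. Qed.

Local Notation hnorm := (hnorm ip).

Lemma hnorm_ge0 x : 0 <= hnorm x.
Proof. exact: sqrtr_ge0. Qed.

Lemma hnorm_sqr x : hnorm x ^+ 2 = complex.Re (ip x x).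
Proof. exact/sqr_sqrtr/(ip_pos hip). Qed.

Lemma hnorm_eq0 x : hnorm x = 0 -> x = 0.
Proof.
move=> /eqP; rewrite sqrtr_eq0 => ReX_le0; apply: (ip_def hip).
have ReX0 : complex.Re (ip x x) = 0 by apply/eqP; rewrite eq_le ReX_le0 (ip_pos hip).
have := ip_sym hip x x; move: ReX0; case: (ip x x) => a b /= -> [ImX].
by have -> : b = 0 by lra.
Qed.

Lemma hnorm_sqr_scaleB (t : R) u v :
  hnorm (t%:C *: u - v) ^+ 2 =
  t ^+ 2 * hnorm u ^+ 2 - 2%:R * t * complex.Re (ip u v) + hnorm v ^+ 2.
Proof.
rewrite !hnorm_sqr ipDl !ipDr !ipZl !ipNl !ipNr !ipZr (ip_sym hip v u).
by rewrite !ReD !ReN !ReMr !ReMJr !ReN !ReJ; ring.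
Qed.

Lemma hnormZr (t : R) x : hnorm (t%:C *: x) = `|t| * hnorm x.
Proof.
apply/eqP; rewrite -(eqrXn2 (_ : 0 < 2)%N) ?mulr_ge0 ?hnorm_ge0 //.
rewrite exprMn real_normK ?num_real // !hnorm_sqr ipZl ipZr ReMr ReMJr.
by rewrite mulrA expr2.
Qed.

Lemma hnormN x : hnorm (- x) = hnorm x.
Proof. by rewrite -scaleN1r -(rmorphN1 (real_complex R)) hnormZr normrN1 mul1r. Qed.

End InnerProduct.

Lemma bounded_operatorZ (R : realType) (H : lmodType R[i]) (ip : H -> H -> R[i])
    (T : H -> H) :
  bounded_operator ip T -> forall a x, T (a *: x) = a *: T x.
Proof.
case=> T_linear _ a x.
have T0 : T 0 = 0 by have := T_linear (-1) 0 0; rewrite scaler0 addr0 scaleN1r addNr.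
by have := T_linear a x 0; rewrite !addr0 T0 addr0.
Qed.

Section ExtremalVector.
Variables (R : realType) (H : lmodType R[i]) (ip : H -> H -> R[i]) (T : H -> H).
Variables (x0 : H) (eps : R) (y0 : H).
Hypotheses (hip : is_inner_product ip) (TZ : forall a x, T (a *: x) = a *: T x).
Hypothesis extremal : extremal_vector ip T x0 eps y0.

Local Notation hnorm := (hnorm ip).

Lemma extremal_vector_neq0 : eps < hnorm x0 -> y0 != 0.
Proof.
move=> lt_eps_x0; apply/eqP => y0_eq0.
have T0 : T 0 = 0 by have := TZ 0 0; rewrite !scale0r.
by case: extremal => + _; rewrite y0_eq0 T0 add0r hnormN //; lra.
Qed.

Lemma extremal_vector_scaled_infeasible t :
  y0 != 0 -> 0 <= t < 1 -> eps < hnorm (t%:C *: T y0 - x0).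
Proof.
move=> y0_neq0 /andP[t_ge0 t_lt1]; rewrite ltNge; apply/negP => feasible.
have y0_gt0 : 0 < hnorm y0.
  by rewrite lt_def hnorm_ge0 andbT; apply: contra_neq y0_neq0; apply: hnorm_eq0.
have := extremal.2 (t%:C *: y0); rewrite TZ hnormZr // ger0_norm // => /(_ feasible).
by rewrite ler_pMl //; lra.
Qed.

Lemma extremal_vector_in_V : 0 < eps -> eps < hnorm x0 -> in_V ip x0 eps (T y0).
Proof.
move=> eps_gt0 lt_eps_x0.
have y0_neq0 := extremal_vector_neq0 lt_eps_x0.
have sqr_le (u v : R) : 0 <= u -> 0 <= v -> (u ^+ 2 <= v ^+ 2) = (u <= v).
  by move=> u_ge0 v_ge0; rewrite ler_pXn2r.
set a := hnorm (T y0) ^+ 2; set c := complex.Re (ip (T y0) x0).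
have f_sqr t : hnorm (t%:C *: T y0 - x0) ^+ 2 = t ^+ 2 * a - 2%:R * t * c + hnorm x0 ^+ 2.
  exact: hnorm_sqr_scaleB.
have f1 : hnorm (T y0 - x0) ^+ 2 = a - 2%:R * c + hnorm x0 ^+ 2.
  by have := f_sqr 1; rewrite rmorph1 scale1r expr1n !mul1r mulr1.
have [g_eq0 k_le0] : eps ^+ 2 - hnorm (T y0 - x0) ^+ 2 = 0 /\ a - c <= 0.
  apply: (quadratic_above_near0 (a := a)); first by rewrite /a sqr_ge0.
    by rewrite subr_ge0 sqr_le ?hnorm_ge0 ?(ltW eps_gt0) //; apply: extremal.1.
  move=> d /andP[d_gt0 d_lt1].
  have : eps ^+ 2 < hnorm ((1 - d)%:C *: T y0 - x0) ^+ 2.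
    rewrite ltr_pXn2r ?nnegrE ?hnorm_ge0 ?ltW //.
    apply: extremal_vector_scaled_infeasible => //.
    by rewrite subr_ge0 ltrBlDr ltrDl d_gt0 ltW.
  have -> : d * (d * a - 2%:R * (a - c)) =
    ((1 - d) ^+ 2 * a - 2%:R * (1 - d) * c + hnorm x0 ^+ 2)
    - (a - 2%:R * c + hnorm x0 ^+ 2).
    by ring.
  by rewrite f_sqr -f1; lra.
split.
  by apply/eqP; rewrite -(eqrXn2 (_ : 0 < 2)%N) ?hnorm_ge0 ?ltW //; apply/eqP; lra.
have r_ge0 : 0 <= hnorm x0 ^+ 2 - eps ^+ 2.
  by rewrite subr_ge0 sqr_le ?hnorm_ge0 ?ltW.
by rewrite -sqr_le ?hnorm_ge0 ?sqrtr_ge0 // (sqr_sqrtr r_ge0) -/a; lra.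
Qed.

End ExtremalVector.

Theorem mainTheorem5 (R : realType) (H : lmodType R[i]) (ip : H -> H -> R[i])
  (HH : sep_inf_dim_hilbert ip)
  (T : H -> H) (HT : bounded_operator ip T) (Hdense : dense_range ip T)
  (x0 : H) (hx0 : x0 != 0) (eps : R) (heps : 0 < eps) (heps' : eps < hnorm ip x0)
  (y0 : H) (hy0 : extremal_vector ip T x0 eps y0) :
  in_V ip x0 eps (T y0) /\
  (forall y : H, in_V ip x0 eps (T y) -> hnorm ip y0 <= hnorm ip y).
Proof.
split; first exact: extremal_vector_in_V (hs_ip HH) (bounded_operatorZ HT) hy0 heps heps'.
by move=> y [Ty_on_sphere _]; apply: hy0.2; rewrite Ty_on_sphere.
Qed.
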